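(* For every $N\ge 2$, $\mathbb{E}[\mathcal{N}_1(N)]=N/2$, and for every $N\ge 3$, $$\mathbb{E}[\mathcal{N}_1(N)^2]=\frac{N(3N+1)}{12},\qquad \operatorname{Var}[\mathcal{N}_1(N)]=\frac{N}{12}.$$
   Context: A random recursive hypergraph (RRH) is the random hypergraph process defined as follows. At size $N=1$ it has vertex set $\{v_1\}$ and edge set $\{\{v_1\}\}$. Given the hypergraph of size $N$ (vertices $v_1,\dots,v_N$, exactly $N$ edges), one chooses an existing edge $e$ uniformly at random, independently of the past, and adds a new vertex $v_{N+1}$ together with the new edge $e\cup\{v_{N+1}\}$. The degree of a vertex is the number of edges containing it. $\mathcal{N}_k(N)$ denotes the number of vertices of degree $k$ in the RRH of size $N$. *)

From mathcomp Require Import all_boot all_order all_algebra.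
Set Implicit Arguments. Unset Strict Implicit. Unset Printing Implicit Defensive.
Import Order.TTheory GRing.Theory Num.Theory.

(* A hypergraph of size N: vertices v_1..v_N are encoded as 0..N-1, and the
   hypergraph is its list of N edges (each edge a list of vertices). *)
Definition hgraph := seq (seq nat).

Definition rrh_step (H : hgraph) (i : nat) : hgraph :=
  rcons H (rcons (nth [::] H i) (size H)).

(* The RRH obtained from a sequence of edge choices, starting from size 1:
   vertex set {v_1}, edge set {{v_1}}. *)
Definition rrh (s : seq nat) : hgraph := foldl rrh_step [:: [:: 0%N]] s.

(* Since the choices are independent and uniform, the law of the RRH of size
   n.+1 is the uniform distribution on these sequences. *)
Fixpoint rrh_choices (n : nat) : seq (seq nat) :=
  if n is n'.+1 then
    [seq rcons s i | s <- rrh_choices n', i <- iota 0 n'.+1]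
  else [:: [::]].

Local Open Scope ring_scope.
Definition rrh_E (N : nat) (f : hgraph -> rat) : rat :=
  (\sum_(s <- rrh_choices N.-1) f (rrh s)) / (size (rrh_choices N.-1))%:R.

Definition rrh_Var (N : nat) (f : hgraph -> rat) : rat :=
  rrh_E N (fun H => (f H - rrh_E N f) ^+ 2).

Definition degree (H : hgraph) (v : nat) : nat := count (fun e => v \in e) H.

Definition Nk (k : nat) (H : hgraph) : nat :=
  count (fun v => degree H v == k) (iota 0 (size H)).

(* A vertex is a leaf (degree 1) iff it lies only in the edge created with it.
   Growing the hypergraph on edge [e_i] adds the new vertex as a leaf and
   destroys exactly one leaf, namely [v_i], when [v_i] was one: every other
   vertex of [e_i] already had degree at least 2.  Hence
   [N_1(step) = N_1 + 1 - [deg v_i = 1]], and averaging over the [N] choices of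
   [i] gives exact linear recurrences for the first two moments of [N_1],
   whose solutions are [N/2] and [N(3N+1)/12]. *)
From mathcomp Require Import all_boot all_order all_algebra.
From mathcomp Require Import ring.
Import Order.TTheory GRing.Theory Num.Theory.
Set Implicit Arguments. Unset Strict Implicit.

(* Edge [j] was created together with vertex [j]. *)
Definition hgraph_wf (H : hgraph) := forall j, (j < size H)%N ->
  all (fun v => (v < size H)%N) (nth [::] H j) && (j \in nth [::] H j).

Lemma rrh_rcons s i : rrh (rcons s i) = rrh_step (rrh s) i.
Proof. by rewrite /rrh foldl_rcons. Qed.

Lemma size_rrh s : size (rrh s) = (size s).+1.
Proof.
elim/last_ind: s => [//|s i IH].
by rewrite rrh_rcons /rrh_step !size_rcons IH.
Qed.

Lemma hgraph_wf_step H i : hgraph_wf H -> hgraph_wf (rrh_step H i).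
Proof.
move=> wfH j; rewrite /rrh_step size_rcons ltnS nth_rcons leq_eqVlt.
have old_edge k : (k < size H)%N ->
    all (fun v => (v < (size H).+1)%N) (nth [::] H k).
  move=> /wfH /andP [/allP inH _]; apply/allP => v /inH; exact: ltnW.
case: (ltnP j (size H)) => [ltjH _ | /[swap] /orP [/eqP eqjH | //]].
  by case/andP: (wfH j ltjH) => _ ->; rewrite old_edge.
move=> _; rewrite eqjH eqxx mem_rcons mem_head andbT all_rcons ltnSn /=.
case: (ltnP i (size H)) => [/old_edge // | geiH].
by rewrite nth_default.
Qed.

Lemma hgraph_wf_rrh s : hgraph_wf (rrh s).
Proof.
elim/last_ind: s => [|s i IH]; last by rewrite rrh_rcons; apply: hgraph_wf_step.
by move=> j; rewrite /= ltnS leqn0 => /eqP ->.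
Qed.

Lemma count_split_at (T : eqType) (P : pred T) (s : seq T) i :
  uniq s -> i \in s ->
  count P s = (count (fun v => P v && (v != i)) s + P i)%N.
Proof.
elim: s => [//|x s IH] /= /andP [xNs uniq_s]; rewrite in_cons.
case: (eqVneq i x) => [-> _ | neix /= i_s]; last by rewrite andbT IH // addnA.
rewrite andbF add0n addnC; congr (_ + _)%N.
apply: eq_in_count => v v_s.
case: (eqVneq v x) => [eqvx | _]; last by rewrite andbT.
by move: xNs; rewrite -eqvx v_s.
Qed.

Section Degrees.

Variable H : hgraph.
Hypothesis wfH : hgraph_wf H.

Lemma degree_rrh_step i v : degree (rrh_step H i) v =
  (degree H v + (v \in rcons (nth [::] H i) (size H)))%N.
Proof. by rewrite /degree /rrh_step -cats1 count_cat /= addn0. Qed.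

Lemma count_edges (a : pred (seq nat)) :
  count a H = count (fun j => a (nth [::] H j)) (iota 0 (size H)).
Proof. by rewrite -{1}(mkseq_nth [::] H) /mkseq count_map. Qed.

Lemma degree_new : degree H (size H) = 0%N.
Proof.
rewrite /degree count_edges; apply/eqP; rewrite -leqn0 leqNgt -has_count.
apply/hasP => -[j]; rewrite mem_iota /= => ltjH.
by case/andP: (wfH ltjH) => /allP inH _ /inH; rewrite ltnn.
Qed.

Lemma degree_gt0 v : (v < size H)%N -> (0 < degree H v)%N.
Proof.
move=> ltvH; rewrite /degree -has_count; apply/hasP.
by exists (nth [::] H v); [exact: mem_nth | case/andP: (wfH ltvH)].
Qed.

Lemma degree_gt1 v i : (v < size H)%N -> (i < size H)%N -> v != i ->
  v \in nth [::] H i -> (1 < degree H v)%N.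
Proof.
move=> ltvH ltiH neqvi v_ei; rewrite /degree count_edges.
rewrite (@count_split_at _ _ _ i) ?iota_uniq ?mem_iota //= v_ei addn1 ltnS.
rewrite -has_count; apply/hasP; exists v; first by rewrite mem_iota.
by rewrite neqvi andbT; case/andP: (wfH ltvH).
Qed.

Lemma leaf_rrh_step_other i v : (v < size H)%N -> (i < size H)%N -> v != i ->
  (degree (rrh_step H i) v == 1%N) = (degree H v == 1%N).
Proof.
move=> ltvH ltiH neqvi.
rewrite degree_rrh_step mem_rcons in_cons (ltn_eqF ltvH) /=.
case v_ei: (v \in nth [::] H i); last by rewrite addn0.
by have := degree_gt1 ltvH ltiH neqvi v_ei; case: (degree H v) => [|[|]].
Qed.

Lemma Nk1_rrh_step i : (i < size H)%N ->
  (Nk 1 (rrh_step H i) + (degree H i == 1%N) = Nk 1 H + 1)%N.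
Proof.
move=> ltiH; rewrite /Nk /rrh_step size_rcons -/(rrh_step H i).
rewrite -[(size H).+1]addn1 iotaD count_cat /=.
rewrite degree_rrh_step mem_rcons mem_head degree_new addn0.
have uniq_iota := iota_uniq 0 (size H).
have i_iota : i \in iota 0 (size H) by rewrite mem_iota.
rewrite (count_split_at _ uniq_iota i_iota).
rewrite [in RHS](count_split_at _ uniq_iota i_iota).
have -> : (degree (rrh_step H i) i == 1%N) = false.
  rewrite degree_rrh_step mem_rcons in_cons; case/andP: (wfH ltiH) => _ ->.
  by rewrite orbT addn1 eqSS; apply/negbTE; rewrite -lt0n degree_gt0.
rewrite (@eq_in_count _ _ (fun v => (degree H v == 1%N) && (v != i))).
  by rewrite addn0 add0n addnAC.
move=> v; rewrite mem_iota => /andP [_ ltvH].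
by case: (eqVneq v i) => [_ | neqvi]; rewrite ?andbF ?leaf_rrh_step_other.
Qed.

End Degrees.

Local Open Scope ring_scope.

Definition leaves (H : hgraph) : rat := (Nk 1 H)%:R.
Definition is_leaf (H : hgraph) (i : nat) : rat := (degree H i == 1%N)%:R.

Lemma sum_quadratic (R : pzRingType) (T : Type) (r : seq T) (g : T -> R) a b c :
  \sum_(x <- r) (a * g x ^+ 2 + b * g x + c) =
  a * \sum_(x <- r) g x ^+ 2 + b * \sum_(x <- r) g x + c * (size r)%:R.
Proof.
rewrite !big_split /= -!mulr_sumr.
by rewrite big_const_seq count_predT iter_addr_0 mulr_natr.
Qed.

Lemma sum_is_leaf H : \sum_(0 <= i < size H) is_leaf H i = leaves H.
Proof.
rewrite /leaves /Nk -sum1_count natr_sum [RHS]big_mkcond /index_iota subn0.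
by apply: eq_bigr => i _; rewrite /is_leaf; case: eqP.
Qed.

Lemma leaves_rrh_step H i : hgraph_wf H -> (i < size H)%N ->
  leaves (rrh_step H i) = leaves H + 1 - is_leaf H i.
Proof.
move=> wfH ltiH; apply: (addIr (is_leaf H i)).
by rewrite subrK /leaves /is_leaf -natrD Nk1_rrh_step // natrD.
Qed.

Lemma sum_leaves_rrh_step H : hgraph_wf H ->
  \sum_(0 <= i < size H) leaves (rrh_step H i) =
  (size H)%:R * (leaves H + 1) - leaves H.
Proof.
move=> wfH; rewrite big_seq (eq_bigr (fun i => leaves H + 1 - is_leaf H i)).
  by rewrite -big_seq sumrB sum_is_leaf sumr_const_nat subn0 mulr_natl.
by move=> i; rewrite mem_index_iota => /andP [_ ltiH]; rewrite leaves_rrh_step.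
Qed.

Lemma sum_leaves2_rrh_step H : hgraph_wf H ->
  \sum_(0 <= i < size H) leaves (rrh_step H i) ^+ 2 =
  (size H)%:R * (leaves H + 1) ^+ 2 - 2 * (leaves H + 1) * leaves H + leaves H.
Proof.
move=> wfH; rewrite big_seq (eq_bigr (fun i =>
  (leaves H + 1) ^+ 2 - 2 * (leaves H + 1) * is_leaf H i + is_leaf H i)).
  rewrite -big_seq big_split sumrB /= sumr_const_nat -mulr_sumr sum_is_leaf.
  by rewrite subn0; ring.
move=> i; rewrite mem_index_iota => /andP [_ ltiH]; rewrite leaves_rrh_step //.
have is_leaf_idem : is_leaf H i ^+ 2 = is_leaf H i by rewrite /is_leaf; case: eqP.
by rewrite -[X in _ = _ + X]is_leaf_idem; ring.
Qed.

Definition rrh_total (m : nat) (F : hgraph -> rat) : rat :=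
  \sum_(s <- rrh_choices m) F (rrh s).

Lemma size_rrh_choices m : size (rrh_choices m) = m`!.
Proof.
by elim: m => // m IH; rewrite size_allpairs size_iota IH factS mulnC.
Qed.

Lemma size_mem_rrh_choices m s : s \in rrh_choices m -> size s = m.
Proof.
elim: m s => [|m IH] s; first by rewrite inE => /eqP ->.
by case/allpairsPdep => [s' [i [s'_ch _ ->]]]; rewrite size_rcons (IH _ s'_ch).
Qed.

Lemma eq_rrh_total m F G :
  (forall H, hgraph_wf H -> size H = m.+1 -> F H = G H) ->
  rrh_total m F = rrh_total m G.
Proof.
move=> eqFG; rewrite /rrh_total !big_seq; apply: eq_bigr => s s_ch.
apply: eqFG; first exact: hgraph_wf_rrh.
by rewrite size_rrh (size_mem_rrh_choices s_ch).
Qed.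

Lemma rrh_totalS m F : rrh_total m.+1 F =
  rrh_total m (fun H => \sum_(0 <= i < size H) F (rrh_step H i)).
Proof.
rewrite /rrh_total big_allpairs_dep big_seq [RHS]big_seq.
apply: eq_bigr => s s_ch.
rewrite size_rrh (size_mem_rrh_choices s_ch).
by apply: eq_bigr => i _; rewrite rrh_rcons.
Qed.

Lemma rrh_total_quadratic m f a b c :
  rrh_total m (fun H => a * f H ^+ 2 + b * f H + c) =
  a * rrh_total m (fun H => f H ^+ 2) + b * rrh_total m f + c * m`!%:R.
Proof. by rewrite /rrh_total sum_quadratic size_rrh_choices. Qed.

Lemma natr_fact_neq0 m : m`!%:R != 0 :> rat.
Proof. by rewrite pnatr_eq0 -lt0n fact_gt0. Qed.

Lemma rrh_E_total m F : rrh_E m.+1 F = rrh_total m F / m`!%:R.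
Proof. by rewrite /rrh_E size_rrh_choices. Qed.

Lemma rrh_Var_moments N f : (0 < N)%N ->
  rrh_Var N f = rrh_E N (fun H => f H ^+ 2) - rrh_E N f ^+ 2.
Proof.
case: N => // m _; rewrite /rrh_Var !rrh_E_total.
set mu := rrh_total m f / _.
rewrite (@eq_rrh_total _ _ (fun H => 1 * f H ^+ 2 + (- 2 * mu) * f H + mu ^+ 2)).
  by rewrite rrh_total_quadratic /mu; field; exact: natr_fact_neq0.
by move=> H _ _; ring.
Qed.

Notation total_leaves m := (rrh_total m leaves).
Notation total_leaves2 m := (rrh_total m (fun H => leaves H ^+ 2)).

Lemma total_leavesS m :
  total_leaves m.+1 = m.+1%:R * (total_leaves m + m`!%:R) - total_leaves m.
Proof.
rewrite rrh_totalS (@eq_rrh_total _ _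
  (fun H => 0 * leaves H ^+ 2 + (m.+1%:R - 1) * leaves H + m.+1%:R)).
  by rewrite rrh_total_quadratic; ring.
by move=> H wfH sizeH; rewrite sum_leaves_rrh_step // sizeH; ring.
Qed.

Lemma total_leaves2S m : total_leaves2 m.+1 =
  m.+1%:R * (total_leaves2 m + 2 * total_leaves m + m`!%:R)
  - 2 * total_leaves2 m - total_leaves m.
Proof.
rewrite (rrh_totalS m (fun H => leaves H ^+ 2)) (@eq_rrh_total _ _ (fun H =>
  (m.+1%:R - 2) * leaves H ^+ 2 + (2 * m.+1%:R - 1) * leaves H + m.+1%:R)).
  by rewrite rrh_total_quadratic; ring.
by move=> H wfH sizeH; rewrite sum_leaves2_rrh_step // sizeH; ring.
Qed.

Lemma total_leaves0 : total_leaves 0 = 1 /\ total_leaves2 0 = 1.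
Proof. by rewrite /rrh_total /= !big_seq1 /leaves /Nk /degree. Qed.

Lemma total_leaves_closed m : (0 < m)%N ->
  total_leaves m = m.+1%:R / 2 * m`!%:R.
Proof.
elim: m => [//|m IH] _; rewrite total_leavesS factS natrM.
case: m IH => [_ | m IH]; first by case: total_leaves0 => -> _; field.
by rewrite IH // -!natr1; field.
Qed.

Lemma total_leaves2_closed m : (1 < m)%N ->
  total_leaves2 m = m.+1%:R * (3 * m.+1%:R + 1) / 12 * m`!%:R.
Proof.
elim: m => [//|m IH] m_gt1.
rewrite total_leaves2S total_leaves_closed // factS natrM.
case: m IH m_gt1 => [//|[_ _ | m IH _]].
  by rewrite total_leaves2S; case: total_leaves0 => -> ->; field.
by rewrite IH // -!natr1; field.
Qed.

Theorem mainTheorem2 :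
  (forall N : nat, (2 <= N)%N ->
     rrh_E N (fun H => (Nk 1 H)%:R) = N%:R / 2) /\
  (forall N : nat, (3 <= N)%N ->
     rrh_E N (fun H => ((Nk 1 H)%:R) ^+ 2) = N%:R * (3 * N%:R + 1) / 12 /\
     rrh_Var N (fun H => (Nk 1 H)%:R) = N%:R / 12).
Proof.
have mean m : (0 < m)%N -> rrh_E m.+1 leaves = m.+1%:R / 2.
  move=> m_gt0.
  by rewrite rrh_E_total total_leaves_closed // mulfK ?natr_fact_neq0.
have second m : (1 < m)%N ->
    rrh_E m.+1 (fun H => leaves H ^+ 2) = m.+1%:R * (3 * m.+1%:R + 1) / 12.
  move=> m_gt1.
  by rewrite rrh_E_total total_leaves2_closed // mulfK ?natr_fact_neq0.
split=> [[//|m] /mean // | [//|m] /[!ltnS] m_gt1].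
split; first exact: second.
by rewrite rrh_Var_moments // second // mean ?(ltnW m_gt1) //; field.
Qed.
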